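(* Let $G$ be a self-similar group generated by a finite symmetric set $S$ of states of a bounded automaton over the alphabet $X=\{0,1\}$, acting transitively on every level $X^n$ of the binary tree, and assume all tile graphs $\Gamma_n'$ of $G$ are connected. Then for every $n\ge1$ the covering $\pi:\Gamma_{n+1}\to\Gamma_n$, $\pi(ux)=u$, is normal with Galois group $\mathrm{Gal}(\Gamma_{n+1}|\Gamma_n)\cong\Psi_G\cong \mathbb Z/2\mathbb Z$.
   Context: Self-similar action: $g(xw)=g(x)\,g|_x(w)$ with $g|_x\in G$. Root permutation $\psi_g\in\mathrm{Sym}(X)$: $x\mapsto g(x)$; $\Psi_G=\langle\psi_s:s\in S\rangle$. A finite invertible automaton is bounded if the number of directed paths of length $n$ in its Moore diagram avoiding the trivial state is bounded independently of $n$. Schreier graph $\Gamma_n$: vertex set $X^n$, for each $v\in X^n$, $s\in S$ an edge joining $v$ and $s(v)$ (edges from $s$ at $v$ and $s^{-1}$ at $s(v)$ identified). Tile graph $\Gamma_n'$: spanning subgraph of $\Gamma_n$ with the edges $\{v,s(v)\}$ such that $s|_v=\mathbb 1$. A $d$-sheeted unramified covering $\pi:\widetilde Y\to Y$ (surjective, locally bijective on neighbourhoods, fibres of size $d$) is normal (Galois) if there are $d$ automorphisms $\sigma$ of $\widetilde Y$ with $\pi\circ\sigma=\pi$; they form the Galois group. *)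

From HB Require Import structures.
From mathcomp Require Import all_boot all_order all_fingroup all_algebra.
From Stdlib Require Import Relations.
Set Implicit Arguments. Unset Strict Implicit. Unset Printing Implicit Defensive.

(* A state q has root permutation rho q : {perm bool} and sections           *)
Section Automaton.
Variables (Q : finType) (rho : Q -> {perm bool}) (tau : Q -> bool -> Q).

Fixpoint aact (q : Q) (w : seq bool) : seq bool :=
  if w is x :: w' then rho q x :: aact (tau q x) w' else [::].

Lemma size_aact q w : size (aact q w) = size w.
Proof. by elim: w q => [|x w IH] q //=; rewrite IH. Qed.

Lemma act_tupleP n q (t : n.-tuple bool) : size (aact q t) == n.
Proof. by rewrite size_aact size_tuple. Qed.

Definition actt n q (t : n.-tuple bool) : n.-tuple bool := Tuple (act_tupleP q t).

Definition sec (q : Q) (u : seq bool) : Q := foldl tau q u.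

Definition trivial_state (q : Q) : Prop := forall w, aact q w = w.

Definition actl (l : seq Q) (w : seq bool) : seq bool := foldr aact w l.

(* bounded automaton: the number of directed paths of length n in the Moore
   diagram (edges q --x--> q|_x) all of whose vertices are non-trivial states
   is bounded independently of n.  A path of length n is a pair (q, w) with
   size w = n; its vertices are the sections of q at the prefixes of w. *)
Definition bounded_automaton : Prop :=
  exists C : nat, forall (n : nat) (P : seq (Q * seq bool)), uniq P ->
    (forall p, p \in P -> size p.2 = n /\
        forall k, k <= n -> ~ trivial_state (sec p.1 (take k p.2))) ->
    size P <= C.

(* G = group generated by S; S symmetric, so G is the monoid generated by S *)
Definition in_group (S : {set Q}) (f : seq bool -> seq bool) : Prop :=
  exists l : seq Q, all (mem S) l /\ forall w, f w = actl l w.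

Definition self_similar (S : {set Q}) : Prop :=
  forall s x, s \in S -> in_group S (aact (tau s x)).

Definition level_transitive (S : {set Q}) : Prop :=
  forall n (u v : n.-tuple bool), exists l : seq Q,
    all (mem S) l /\ actl l u = v.

Definition tile_edge (S : {set Q}) (n : nat) (u v : n.-tuple bool) : Prop :=
  exists s, s \in S /\ actt s u = v /\ trivial_state (sec s u).

Definition tile_connected (S : {set Q}) (n : nat) : Prop :=
  forall u v : n.-tuple bool, clos_refl_sym_trans _ (@tile_edge S n) u v.

Variables (S : {set Q}) (inv : Q -> Q).

Definition gen := {q : Q | q \in S}.

(* darts of Gamma_n: (v, s) is the dart from v to s(v) *)
Definition dart (n : nat) := (n.-tuple bool * gen)%type.

Definition dsrc n (d : dart n) : n.-tuple bool := d.1.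

Definition drev n (d : dart n) : dart n :=
  (actt (val d.2) d.1, insubd d.2 (inv (val d.2))).

Lemma take_tupleP n (t : n.+1.-tuple bool) : size (take n t) == n.
Proof. by rewrite size_takel // size_tuple. Qed.

Definition piV n (t : n.+1.-tuple bool) : n.-tuple bool := Tuple (take_tupleP t).
Definition piD n (d : dart n.+1) : dart n := (piV d.1, d.2).

End Automaton.

(* Generic dart graphs (V, D, src, rev): rev is an involution on darts;      *)
(* the target of d is src (rev d).  Fixed darts of rev are half-loops.       *)
Section Coverings.
Variables (V1 D1 V2 D2 : finType).
Variables (src1 : D1 -> V1) (rev1 : D1 -> D1) (src2 : D2 -> V2) (rev2 : D2 -> D2).
Variables (fV : V1 -> V2) (fD : D1 -> D2).

Definition graph_morphism : Prop :=
  forall d, fV (src1 d) = src2 (fD d) /\ fD (rev1 d) = rev2 (fD d).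

Definition is_covering (k : nat) : Prop :=
  [/\ graph_morphism,
      forall v2, exists v1, fV v1 = v2,
      forall v1 d2, src2 d2 = fV v1 -> exists! d1, src1 d1 = v1 /\ fD d1 = d2
    & forall v2, #|[set v1 | fV v1 == v2]| = k].

Definition deck_group : {set ({perm V1} * {perm D1})%type} :=
  [set p : ({perm V1} * {perm D1})%type | [forall d, [&& src1 (p.2 d) == p.1 (src1 d),
                          rev1 (p.2 d) == p.2 (rev1 d) &
                          fD (p.2 d) == fD d]]
           && [forall v, fV (p.1 v) == fV v]].

Definition normal_covering (k : nat) : Prop :=
  is_covering k /\ #|deck_group| = k.

End Coverings.

From HB Require Import structures.
From mathcomp Require Import all_boot all_order all_fingroup all_algebra all_solvable.
From Stdlib Require Import Relations.
Set Implicit Arguments. Unset Strict Implicit. Unset Printing Implicit Defensive.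

(** Both permutations of {0,1} commute with exchanging 0 and 1, so by
    g(ux) = g(u) g|_u(x) flipping the last letter of a word commutes with every
    element of G; hence it is a deck transformation of Gamma_(n+1) -> Gamma_n.
    As G is transitive on X^(n+1), a deck transformation is determined by the
    image of one vertex, which must lie in the 2-element fibre of that vertex:
    the Galois group is {1, flip} = Z/2Z.  Transitivity on X^1 forces some
    generator to have a nontrivial root permutation, so Psi_G = Sym(X) = Z/2Z. *)

Lemma perm_bool_negb (r : {perm bool}) x : r (~~ x) = ~~ r x.
Proof.
have : r (~~ x) != r x by rewrite (inj_eq perm_inj); case: x.
by case: (r (~~ x)); case: (r x).
Qed.

Definition flip_last (w : seq bool) :=
  take (size w).-1 w ++ map negb (drop (size w).-1 w).

Lemma flip_last_rcons u x : flip_last (rcons u x) = rcons u (~~ x).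
Proof. by rewrite /flip_last size_rcons -!cats1 take_size_cat // drop_size_cat. Qed.

Section AutomatonAction.
Variables (Q : finType) (rho : Q -> {perm bool}) (tau : Q -> bool -> Q).

Lemma aact_rcons q u x :
  aact rho tau q (rcons u x) = rcons (aact rho tau q u) (rho (sec tau q u) x).
Proof. by elim: u q => [|y u IH] q //=; rewrite IH. Qed.

Lemma take_aact q m w : take m (aact rho tau q w) = aact rho tau q (take m w).
Proof. by elim: w q m => [|y w IH] q [|m] //=; rewrite IH. Qed.

Lemma size_actl l w : size (actl rho tau l w) = size w.
Proof. by elim: l => [|q l IH] //=; rewrite size_aact. Qed.

Lemma aact_flip_last q w :
  aact rho tau q (flip_last w) = flip_last (aact rho tau q w).
Proof.
case/lastP: w => [|u x] //.
by rewrite flip_last_rcons !aact_rcons flip_last_rcons perm_bool_negb.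
Qed.

End AutomatonAction.

Section LastLetter.
Variable n : nat.

Definition extend (v : n.-tuple bool) b : n.+1.-tuple bool := [tuple of rcons v b].

Lemma piV_extend v b : piV (extend v b) = v.
Proof. by apply: val_inj; rewrite /= -cats1 take_size_cat ?size_tuple. Qed.

Lemma extend_inj v : injective (extend v).
Proof. by move=> b c /(congr1 (fun t : n.+1.-tuple bool => last b t)); rewrite /= !last_rcons. Qed.

Lemma extend_piV (t : n.+1.-tuple bool) : extend (piV t) (last false t) = t.
Proof.
apply: val_inj; case: t => s /=; case/lastP: s => [|u x] //.
rewrite size_rcons eqSS => /eqP su.
by rewrite last_rcons -[in take _ _]cats1 -su take_size_cat.
Qed.

Lemma piV_fibre v : [set t | piV t == v] = [set extend v false; extend v true].
Proof.
apply/setP => t; rewrite !inE; apply/eqP/idP => [<- | ].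
  by case: (last false t) (extend_piV t) => ->; rewrite eqxx ?orbT.
by case/orP => /eqP ->; rewrite piV_extend.
Qed.

Lemma flipT_subproof (t : n.+1.-tuple bool) : size (flip_last t) == n.+1.
Proof.
case: t => s /= /eqP <-; apply/eqP.
by case/lastP: s => // u x; rewrite flip_last_rcons !size_rcons.
Qed.

Definition flipT (t : n.+1.-tuple bool) : n.+1.-tuple bool := Tuple (flipT_subproof t).

Lemma flipT_extend v b : flipT (extend v b) = extend v (~~ b).
Proof. exact/val_inj/flip_last_rcons. Qed.

Lemma flipTK : involutive flipT.
Proof. by move=> t; rewrite -[t]extend_piV !flipT_extend negbK. Qed.

Lemma piV_flipT t : piV (flipT t) = piV t.
Proof. by rewrite -[t]extend_piV flipT_extend !piV_extend. Qed.

End LastLetter.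

Section DeckGroup.
Variables (Q : finType) (rho : Q -> {perm bool}) (tau : Q -> bool -> Q).
Variables (S : {set Q}) (inv : Q -> Q) (n : nat).

Local Notation Deck := (deck_group (@dsrc Q S n.+1) (@drev Q rho tau S inv n.+1)
  (@piV n) (@piD Q S n)).

Lemma piD_covering :
  is_covering (@dsrc Q S n.+1) (@drev Q rho tau S inv n.+1)
    (@dsrc Q S n) (@drev Q rho tau S inv n) (@piV n) (@piD Q S n) 2.
Proof.
split.
- case=> t s; split => //; congr (_, _); apply: val_inj.
  by rewrite /= take_aact.
- by move=> v; exists (extend v false); rewrite piV_extend.
- move=> t [v s] /= tv; exists (t, s); split; first by rewrite /piD /= -tv.
  by case=> t' s' [/= -> /(congr1 snd) /= ->].
- move=> v; rewrite piV_fibre cards2.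
  by rewrite (inj_eq (@extend_inj n v)).
Qed.

Definition flipD (d : dart S n.+1) : dart S n.+1 := (flipT d.1, d.2).

Lemma flipDK : involutive flipD.
Proof. by case=> t s; rewrite /flipD /= flipTK. Qed.

Definition flip_deck : ({perm n.+1.-tuple bool} * {perm dart S n.+1})%type :=
  (perm (can_inj (@flipTK n)), perm (can_inj flipDK)).

Lemma flip_deck_in : flip_deck \in Deck.
Proof.
rewrite inE; apply/andP; split; apply/forallP.
  case=> t s; rewrite /= !permE /flipD /=; apply/and3P; split => //.
    apply/eqP; congr (_, _); apply: val_inj.
    by rewrite /= aact_flip_last.
  by rewrite /piD /= piV_flipT.
by move=> t; rewrite permE piV_flipT.
Qed.

Lemma deck1 : 1%g \in Deck.
Proof. by rewrite inE; apply/andP; split; apply/forallP => d; rewrite !perm1 ?eqxx. Qed.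

Lemma deck_dart p d : p \in Deck -> p.2 d = (p.1 d.1, d.2).
Proof.
rewrite inE => /andP[/forallP /(_ d) /and3P[/eqP src_p _ /eqP piD_p] _].
rewrite [p.2 d]surjective_pairing; congr (_, _); [exact: src_p | exact: (congr1 snd piD_p)].
Qed.

Lemma deck_actt p s t : s \in S -> p \in Deck ->
  p.1 (actt rho tau s t) = actt rho tau s (p.1 t).
Proof.
move=> Ss Dp; have := Dp; rewrite inE => /andP[/forallP /(_ (t, Sub s Ss))].
by case/and3P=> _ /eqP; rewrite !deck_dart //= => -[].
Qed.

Lemma deck_actl p l (t w : n.+1.-tuple bool) : p \in Deck -> all (mem S) l ->
  actl rho tau l t = w -> actl rho tau l (p.1 t) = p.1 w.
Proof.
move=> Dp; elim: l w => [|s l IH] w /=; first by move=> _ /val_inj ->.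
case/andP=> Ss Sl ltw.
have lt_size : size (actl rho tau l t) == n.+1 by rewrite size_actl size_tuple.
rewrite (IH (Tuple lt_size)) //.
have -> : w = actt rho tau s (Tuple lt_size) by exact: val_inj.
by rewrite deck_actt.
Qed.

Lemma flip_deck_neq1 : flip_deck != 1%g.
Proof.
apply/eqP => /(congr1 fst) /permP /(_ (extend (nseq_tuple n false) false)).
by rewrite permE perm1 flipT_extend => /extend_inj.
Qed.

Lemma order_flip_deck : #[flip_deck]%g = 2.
Proof.
have flip_deck2 : (flip_deck ^+ 2 = 1)%g.
  by rewrite expgS expg1; congr (_, _); apply/permP => x;
    rewrite permM !permE /= ?flipTK ?flipDK.
apply/eqP; rewrite eqn_leq order_gt1 flip_deck_neq1 andbT.
by rewrite dvdn_leq // order_dvdn flip_deck2.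
Qed.

Hypothesis Htrans : level_transitive rho tau S.

Lemma eq_deck_at p q t : p \in Deck -> q \in Deck -> p.1 t = q.1 t -> p = q.
Proof.
move=> Dp Dq pq_t.
have p1E : p.1 = q.1.
  apply/permP => w; have [l [Sl ltw]] := Htrans t w.
  by apply: val_inj; rewrite /= -(deck_actl Dp Sl ltw) -(deck_actl Dq Sl ltw) pq_t.
have p2E : p.2 = q.2 by apply/permP => d; rewrite !deck_dart // p1E.
by case: p q p1E p2E {Dp Dq pq_t} => [p1 p2] [q1 q2] /= -> ->.
Qed.

Lemma deck_groupE : Deck = <[flip_deck]>%g.
Proof.
rewrite cycle2g ?order_flip_deck //; apply/setP => p; rewrite in_set2.
apply/idP/idP => [Dp | /orP[] /eqP ->]; [ | exact: deck1 | exact: flip_deck_in].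
pose t := extend (nseq_tuple n false) false.
have : p.1 t \in [set t' | piV t' == piV t].
  by move: Dp; rewrite !inE => /andP[_ /forallP /(_ t)].
rewrite piV_fibre piV_extend in_set2 => /orP[] /eqP pt; apply/orP; [left | right].
  by apply/eqP/(eq_deck_at (t := t) Dp deck1); rewrite pt perm1.
by apply/eqP/(eq_deck_at (t := t) Dp flip_deck_in); rewrite pt permE flipT_extend.
Qed.

End DeckGroup.

Section RootPermutations.
Variables (Q : finType) (rho : Q -> {perm bool}) (tau : Q -> bool -> Q).

Lemma actl_root_fixed l x :
  all (fun q => rho q == 1%g) l -> actl rho tau l [:: x] = [:: x].
Proof. by elim: l => //= q l IH /andP[/eqP rq /IH ->]; rewrite /= rq perm1. Qed.

Lemma card_root_perm_group S :
  level_transitive rho tau S -> #|<<[set rho s | s in S]>>%g| = 2.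
Proof.
move=> Htrans; apply/eqP; rewrite eqn_leq; apply/andP; split.
  have <- : #|perm_on [set: bool]| = 2 by rewrite card_perm cardsT card_bool.
  by apply/subset_leq_card/subsetP => r _; apply/subsetP => x; rewrite inE.
have : ~~ [forall s in S, rho s == 1%g].
  apply/negP => /forall_inP all1.
  have [l [Sl lft]] := Htrans 1 [tuple false] [tuple true].
  suff : actl rho tau l [:: false] = [:: false] by rewrite lft.
  by apply: actl_root_fixed; apply/allP => q /(allP Sl); apply: all1.
rewrite negb_forall_in => /exists_inP[s Ss rs].
rewrite cardG_gt1; apply: contra_neq rs => Psi1.
by apply/set1gP; rewrite -Psi1 mem_gen // imset_f.
Qed.

End RootPermutations.

Lemma isog_card2 (aT rT : finGroupType) (G : {group aT}) (H : {group rT}) :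
  #|G| = 2 -> #|H| = 2 -> G \isog H.
Proof. by move=> cG cH; rewrite isog_cyclic_card ?prime_cyclic ?cG ?cH. Qed.

Theorem corollary4p2
  (Q : finType) (rho : Q -> {perm bool}) (tau : Q -> bool -> Q)
  (S : {set Q}) (inv : Q -> Q)
  (Hbounded : bounded_automaton rho tau)
  (Hdistinct : forall s t, s \in S -> t \in S ->
      (forall w, aact rho tau s w = aact rho tau t w) -> s = t)
  (Hsym : forall s, s \in S ->
      inv s \in S /\ forall w, aact rho tau (inv s) (aact rho tau s w) = w)
  (Hselfsim : self_similar rho tau S)
  (Htrans : level_transitive rho tau S)
  (Htile : forall n, tile_connected rho tau S n) :
  forall n : nat, 0 < n ->
    let srcV := @dsrc Q S n.+1 in
    let revV := @drev Q rho tau S inv n.+1 in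
    let src0 := @dsrc Q S n in
    let rev0 := @drev Q rho tau S inv n in
    normal_covering srcV revV src0 rev0 (@piV n) (@piD Q S n) 2
    /\ deck_group srcV revV (@piV n) (@piD Q S n)
         \isog <<[set rho s | s in S]>>
    /\ <<[set rho s | s in S]>> \isog [set: 'Z_2].
Proof.
move=> n _ srcV revV src0 rev0.
have deckE := deck_groupE inv n Htrans.
have card_Psi := card_root_perm_group Htrans.
split; [split | split].
- exact: piD_covering.
- by rewrite deckE -orderE order_flip_deck.
- by rewrite deckE isog_card2 // -orderE order_flip_deck.
- by rewrite isog_card2 // cardsT card_ord.
Qed.
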